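(* Let $\mathcal M=\langle M,<,+,\{x\mapsto\lambda x\}_{\lambda\in\Lambda}\rangle$ be an ordered vector space over an ordered division ring $\Lambda$, and let $E\subseteq\prod_{i\in[r]}M^{d_i}$ be a semilinear set. Then $Zar^\infty(E)$ holds: there is $\alpha\in\mathbb R_{>0}$ such that if $E$ contains no infinite grid, then $|E\cap B|\le\alpha\,\delta(B)$ for every finite grid $B$.
   Context: A semilinear set is a set definable (with parameters) in $\mathcal M$. A grid is a product $B=B_1\times\dots\times B_r$ with $B_i\subseteq M^{d_i}$; finite/infinite if each $B_i$ is. $\delta(B)=\sum_{1\le i_1<\dots<i_{r-1}\le r}\prod_{j=1}^{r-1}|B_{i_j}|$. *)

From HB Require Import structures.
From mathcomp Require Import all_boot all_order all_algebra.
From mathcomp Require Import finmap.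
From Stdlib Require Import Rdefinitions Raxioms ClassicalDescription.

Set Implicit Arguments.
Unset Strict Implicit.
Unset Printing Implicit Defensive.
Import GRing.Theory.
Local Open Scope ring_scope.

Definition ordered_division_ring (L : unitRingType) (ltL : rel L) : Prop :=
  (forall x : L, x != 0 -> x \is a GRing.unit) /\
  (forall x, ~~ ltL x x) /\
  (forall x y z, ltL x y -> ltL y z -> ltL x z) /\
  (forall x y, (ltL x y || (x == y) || ltL y x)) /\
  (forall x y z, ltL x y -> ltL (x + z) (y + z)) /\
  (forall x y, ltL 0 x -> ltL 0 y -> ltL 0 (x * y)).

Definition ordered_vector_space (L : unitRingType) (ltL : rel L)
    (M : lmodType L) (ltM : rel M) : Prop :=
  (forall x : M, ~~ ltM x x) /\
  (forall x y z, ltM x y -> ltM y z -> ltM x z) /\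
  (forall x y, (ltM x y || (x == y) || ltM y x)) /\
  (forall x y z, ltM x y -> ltM (x + z) (y + z)) /\
  (forall (l : L) x y, ltL 0 l -> ltM x y -> ltM (l *: x) (l *: y)).

Inductive term (L : unitRingType) (M : lmodType L) (V : Type) : Type :=
| TVar : V -> term M V
| TPar : M -> term M V
| TAdd : term M V -> term M V -> term M V
| TScale : L -> term M V -> term M V.

Inductive formula (L : unitRingType) (M : lmodType L) : Type -> Type :=
| FEq V : term M V -> term M V -> formula M V
| FLt V : term M V -> term M V -> formula M V
| FNot V : formula M V -> formula M V
| FAnd V : formula M V -> formula M V -> formula M V
| FEx V : formula M (option V) -> formula M V.  (* binds the new variable None *)

Fixpoint teval (L : unitRingType) (M : lmodType L) (V : Type)
    (e : V -> M) (t : term M V) : M :=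
  match t with
  | TVar v => e v
  | TPar c => c
  | TAdd t1 t2 => teval e t1 + teval e t2
  | TScale l t1 => l *: teval e t1
  end.

Fixpoint sat_ (L : unitRingType) (M : lmodType L) (ltM : rel M) (V : Type)
    (f : formula M V) {struct f} : (V -> M) -> Prop :=
  match f in formula _ V0 return (V0 -> M) -> Prop with
  | FEq _ t1 t2 => fun e => teval e t1 = teval e t2
  | FLt _ t1 t2 => fun e => ltM (teval e t1) (teval e t2)
  | FNot _ g => fun e => ~ sat_ ltM g e
  | FAnd _ g h => fun e => sat_ ltM g e /\ sat_ ltM h e
  | FEx _ g => fun e =>
      exists a : M, sat_ ltM g (fun o => if o is Some v then e v else a)
  end.

Definition sat (L : unitRingType) (M : lmodType L) (ltM : rel M) (V : Type)
    (e : V -> M) (f : formula M V) : Prop := sat_ ltM f e.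

Definition point (L : unitRingType) (M : lmodType L) (r : nat) (d : 'I_r -> nat)
  := forall i : 'I_r, 'rV[M]_(d i).

(* coordinate variables: the j-th coordinate of the i-th block *)
Definition coord_env (L : unitRingType) (M : lmodType L) (r : nat) (d : 'I_r -> nat)
    (p : point M d) : {i : 'I_r & 'I_(d i)} -> M :=
  fun v => p (tag v) 0 (tagged v).

Definition semilinear_set (L : unitRingType) (M : lmodType L) (ltM : rel M)
    (r : nat) (d : 'I_r -> nat) (E : point M d -> Prop) : Prop :=
  exists f : formula M {i : 'I_r & 'I_(d i)},
    forall p, E p <-> sat ltM (coord_env p) f.

Definition infinite_set (T : eqType) (A : T -> Prop) : Prop :=
  ~ exists s : seq T, forall x, A x -> x \in s.

Definition contains_infinite_grid (L : unitRingType) (M : lmodType L)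
    (r : nat) (d : 'I_r -> nat) (E : point M d -> Prop) : Prop :=
  exists B : forall i : 'I_r, 'rV[M]_(d i) -> Prop,
    (forall i, infinite_set (B i)) /\
    (forall p : point M d, (forall i, B i (p i)) -> E p).

Definition pbool (P : Prop) : bool :=
  if excluded_middle_informative P then true else false.

Definition grid_count (L : unitRingType) (M : lmodType L)
    (r : nat) (d : 'I_r -> nat) (E : point M d -> Prop)
    (B : forall i : 'I_r, {fset 'rV[M]_(d i)}) : nat :=
  #|[set f : {dffun forall i : 'I_r, B i} | pbool (E (fun i => val (f i))) ]|.

Definition grid_delta (L : unitRingType) (M : lmodType L)
    (r : nat) (d : 'I_r -> nat) (B : forall i : 'I_r, {fset 'rV[M]_(d i)}) : nat :=
  (\sum_(I : {set 'I_r} | #|I| == r.-1) \prod_(i in I) #|` B i|)%N.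

(* Fourier-Motzkin elimination writes a semilinear set E as a finite union of
   cells, each cut out by linear equations [l = 0] and strict inequalities
   [0 < l] in the coordinates, so it suffices to bound |C ∩ B| by δ(B) for a
   single cell C contained in E.  Gaussian elimination over Λ splits the
   equations of C, block by block, into two cases: either they determine the
   i-th block of a point from the others, and then |C ∩ B| ≤ ∏_{j≠i} |B_j|
   ≤ δ(B); or they admit a nonzero solution a_i supported on the i-th block.
   If the second case holds for every block and C contains a point p, then
   adding a_i ε/2^n to the i-th block of p, independently for each i and with
   ε small enough for the strict inequalities to survive, stays inside C: an
   infinite grid in E.  Hence α = (number of cells) + 1 works. *)

From HB Require Import structures.
From mathcomp Require Import all_boot all_order all_algebra.
From mathcomp Require Import finmap.
From Stdlib Require Import Rdefinitions RIneq ClassicalDescription.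

Set Implicit Arguments.
Unset Strict Implicit.
Unset Printing Implicit Defensive.
Import GRing.Theory.
Local Open Scope ring_scope.

Section GridCount.
Variables (L : unitRingType) (M : lmodType L) (r : nat) (d : 'I_r -> nat).
Implicit Types (E : point M d -> Prop) (B : forall i : 'I_r, {fset 'rV[M]_(d i)}).

Lemma pboolP (P : Prop) : reflect P (pbool P).
Proof. by rewrite /pbool; case: excluded_middle_informative => P_dec; constructor. Qed.

Lemma grid_count_mono E E' B : (forall p, E p -> E' p) -> (grid_count E B <= grid_count E' B)%nat.
Proof. by move=> EE'; apply/subset_leq_card/subsetP => f; rewrite !inE => /pboolP/EE'/pboolP. Qed.

Lemma grid_count0 E B : (forall p, ~ E p) -> grid_count E B = 0%nat.
Proof.
move=> E0; apply/eqP; rewrite cards_eq0; apply/eqP/setP => f.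
by rewrite !inE; case: pboolP => // /E0.
Qed.

Lemma grid_count_or E1 E2 B :
  (grid_count (fun p => E1 p \/ E2 p) B <= grid_count E1 B + grid_count E2 B)%nat.
Proof.
apply: leq_trans (leq_card_setU _ _).1; apply/subset_leq_card/subsetP => f.
by rewrite !inE => /pboolP[/pboolP->|/pboolP->]; rewrite ?orbT.
Qed.

Lemma grid_count_has (T : eqType) (P : T -> point M d -> bool) (D : seq T) B k :
  {in D, forall C, (grid_count (P C) B <= k)%nat} ->
  (grid_count (fun p => has (P^~ p) D) B <= size D * k)%nat.
Proof.
elim: D => [_|C D IH P_le]; first by rewrite grid_count0.
apply: leq_trans (grid_count_mono _ (fun p => @orP _ _)) _.
apply: leq_trans (grid_count_or _ _ _) _; rewrite mulSn leq_add ?P_le ?mem_head //.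
by apply: IH => C' C'_D; apply: P_le; rewrite in_cons C'_D orbT.
Qed.

Lemma grid_count_functional E B i :
  (forall p q, E p -> E q -> (forall j, j != i -> p j = q j) -> p i = q i) ->
  (grid_count E B <= grid_delta B)%nat.
Proof.
move=> E_fun; rewrite /grid_count; set S := [set f | _].
have [->|[f0 _]] := set_0Vmem S; first by rewrite cards0.
(* Overwriting the i-th coordinate by that of [f0] is injective on the points
   of [E] and lands in a grid whose i-th factor is a singleton. *)
pose F j := [pred y : B j | (j == i) ==> (y == f0 j)].
pose phi (f : {dffun forall j, B j}) : {dffun forall j, B j} :=
  [ffun j => if j == i then f0 j else f j].
have phi_inj : {in S &, injective phi}.
  move=> f g; rewrite !inE => /pboolP E_f /pboolP E_g fg.
  have fg_j j : j != i -> f j = g j.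
    move/negbTE => j_i; apply: val_inj.
    by have := congr1 (fun h : {dffun forall j, B j} => val (h j)) fg; rewrite !ffunE j_i.
  apply/ffunP => j; have [->|/fg_j //] := eqVneq j i.
  by apply/val_inj/(E_fun _ _ E_f E_g) => k /fg_j ->.
rewrite -(card_in_imset phi_inj).
apply: (@leq_trans #|(family F : simpl_pred {dffun forall j, B j})|).
  apply/subset_leq_card/subsetP => _ /imsetP[f _ ->]; apply/familyP => j.
  by rewrite inE ffunE; case: eqP => // ->; rewrite eqxx.
rewrite card_family foldrE big_map big_enum /= (bigD1 i) //=.
have -> : #|F i| = 1%nat by apply: (@eq_card1 _ (f0 i)) => y; rewrite !inE eqxx.
rewrite mul1n /grid_delta (bigD1 [set~ i]) /=; last by rewrite cardsC1 card_ord.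
apply: leq_trans (leq_addr _ _); apply: eq_leq; apply: eq_big => [j|j /negbTE j_i].
  by rewrite !inE.
by rewrite cardfE; apply: eq_card => y; rewrite !inE j_i.
Qed.

End GridCount.

Lemma grid_count_r0 (L : unitRingType) (M : lmodType L) (d : 'I_0 -> nat)
    (E : point M d -> Prop) (B : forall i : 'I_0, {fset 'rV[M]_(d i)}) :
  (grid_count E B <= grid_delta B)%nat.
Proof.
rewrite /grid_delta (bigD1 set0) ?cards0 //= big_set0; apply: leq_trans (leq_addr _ _).
apply: leq_trans (max_card _) _.
by rewrite card_dep_ffun foldrE big_map big_enum /= big_ord0.
Qed.

Lemma infinite_set_inj (T : eqType) (A : T -> Prop) (f : nat -> T) :
  injective f -> (forall n, A (f n)) -> infinite_set A.
Proof.
move=> f_inj A_f [s A_s].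
have f_uniq : uniq (map f (seq.iota 0 (size s).+1)) by rewrite map_inj_uniq ?iota_uniq.
have /(uniq_leq_size f_uniq) : {subset map f (seq.iota 0 (size s).+1) <= s}.
  by move=> _ /mapP[n _ ->]; apply: A_s.
by rewrite size_map size_iota ltnn.
Qed.

Section OrderedVectorSpace.
Variables (L : unitRingType) (ltL : rel L) (M : lmodType L) (ltM : rel M).
Hypotheses (HL : ordered_division_ring ltL) (HM : ordered_vector_space ltL ltM).

Lemma unitL (x : L) : x != 0 -> x \is a GRing.unit.
Proof. by case: HL => h _; apply: h. Qed.

Lemma ltL_irr (x : L) : ~~ ltL x x.
Proof. by case: HL => _ [h _]; apply: h. Qed.

Lemma ltL_trans (x y z : L) : ltL x y -> ltL y z -> ltL x z.
Proof. by case: HL => _ [_ [h _]]; apply: h. Qed.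

Lemma ltL_total (x y : L) : [|| ltL x y, x == y | ltL y x].
Proof. by case: HL => _ [_ [_ [h _]]]; rewrite orbA; apply: h. Qed.

Lemma ltL_add2r (x y z : L) : ltL x y -> ltL (x + z) (y + z).
Proof. by case: HL => _ [_ [_ [_ [h _]]]]; apply: h. Qed.

Lemma ltL_mul_gt0 (x y : L) : ltL 0 x -> ltL 0 y -> ltL 0 (x * y).
Proof. by case: HL => _ [_ [_ [_ [_ h]]]]; apply: h. Qed.

Lemma ltL_subr_gt0 (x y : L) : ltL 0 (y - x) = ltL x y.
Proof.
apply/idP/idP => h; last by have := ltL_add2r (- x) h; rewrite subrr.
by have := ltL_add2r x h; rewrite add0r subrK.
Qed.

Lemma ltL_oppr_gt0 (x : L) : ltL 0 (- x) = ltL x 0.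
Proof. by rewrite -[- x]sub0r ltL_subr_gt0. Qed.

Lemma ltL_asym (x y : L) : ltL x y -> ~~ ltL y x.
Proof. by move=> xy; apply/negP => /(ltL_trans xy); rewrite (negbTE (ltL_irr x)). Qed.

Lemma ltL_gt0_neq0 (x : L) : ltL 0 x -> x != 0.
Proof. by apply: contraTneq => ->; apply: ltL_irr. Qed.

Lemma ltL_neq0 (x : L) : x != 0 -> ltL 0 x \/ ltL x 0.
Proof. by move=> x0; move: (ltL_total 0 x); rewrite eq_sym (negbTE x0) /= => /orP. Qed.

Lemma ltL01 : ltL 0 1.
Proof.
case: (ltL_neq0 (oner_neq0 L)) => // lt10.
have gt0N1 : ltL 0 (- 1) by rewrite ltL_oppr_gt0.
by have := ltL_mul_gt0 gt0N1 gt0N1; rewrite mulrNN mulr1 => /ltL_asym; rewrite lt10.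
Qed.

Lemma ltL_invr_gt0 (x : L) : ltL 0 x -> ltL 0 x^-1.
Proof.
move=> x_gt0; have x_unit := unitL (ltL_gt0_neq0 x_gt0).
case: (@ltL_neq0 x^-1) => [|//|]; first by rewrite invr_eq0 ltL_gt0_neq0.
rewrite -ltL_oppr_gt0 => /(ltL_mul_gt0 x_gt0).
by rewrite mulrN mulrV // ltL_oppr_gt0 => /ltL_asym; rewrite ltL01.
Qed.

Lemma ltL_nat_gt0 n : ltL 0 n.+1%:R.
Proof.
elim: n => [|n IHn]; first exact: ltL01.
by apply: ltL_trans IHn _; rewrite -ltL_subr_gt0 -natrB // subSnn ltL01.
Qed.

Lemma ltM_irr (x : M) : ~~ ltM x x.
Proof. by case: HM => h _; apply: h. Qed.

Lemma ltM_trans (x y z : M) : ltM x y -> ltM y z -> ltM x z.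
Proof. by case: HM => _ [h _]; apply: h. Qed.

Lemma ltM_total (x y : M) : [|| ltM x y, x == y | ltM y x].
Proof. by case: HM => _ [_ [h _]]; rewrite orbA; apply: h. Qed.

Lemma ltM_add2r (x y z : M) : ltM x y -> ltM (x + z) (y + z).
Proof. by case: HM => _ [_ [_ [h _]]]; apply: h. Qed.

Lemma ltM_scale2l (l : L) (x y : M) : ltL 0 l -> ltM x y -> ltM (l *: x) (l *: y).
Proof. by case: HM => _ [_ [_ [_ h]]]; apply: h. Qed.

Lemma ltM_add2l (x y z : M) : ltM x y -> ltM (z + x) (z + y).
Proof. by rewrite ![z + _]addrC; apply: ltM_add2r. Qed.

Lemma ltM_subr_gt0 (x y : M) : ltM 0 (y - x) = ltM x y.
Proof.
apply/idP/idP => h; last by have := ltM_add2r (- x) h; rewrite subrr.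
by have := ltM_add2r x h; rewrite add0r subrK.
Qed.

Lemma ltM_opp2 (x y : M) : ltM (- x) (- y) = ltM y x.
Proof. by rewrite -ltM_subr_gt0 opprK addrC ltM_subr_gt0. Qed.

Lemma ltM_asym (x y : M) : ltM x y -> ~~ ltM y x.
Proof. by move=> xy; apply/negP => /(ltM_trans xy); rewrite (negbTE (ltM_irr x)). Qed.

Lemma ltM_scale_gt0 (l : L) (x : M) : ltL 0 l -> ltM 0 x -> ltM 0 (l *: x).
Proof. by move=> l_gt0 /(ltM_scale2l l_gt0); rewrite scaler0. Qed.

Definition leM (x y : M) := (x == y) || ltM x y.

Lemma leMNgt (x y : M) : leM x y = ~~ ltM y x.
Proof.
rewrite /leM; case: (boolP (ltM y x)) => [yx|]; last first.
  by move: (ltM_total x y); rewrite eq_sym => /orP[->|/orP[]->]; rewrite ?orbT.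
by rewrite (negbTE (ltM_asym yx)) orbF; apply: contraTF yx => /eqP->; apply: ltM_irr.
Qed.

Lemma leM_refl (x : M) : leM x x.
Proof. by rewrite /leM eqxx. Qed.

Lemma lt_leM_trans (x y z : M) : ltM x y -> leM y z -> ltM x z.
Proof. by move=> xy /orP[/eqP<-//|]; apply: ltM_trans. Qed.

Lemma le_ltM_trans (x y z : M) : leM x y -> ltM y z -> ltM x z.
Proof. by case/orP => [/eqP->//|]; apply: ltM_trans. Qed.

Lemma leM_trans (x y z : M) : leM x y -> leM y z -> leM x z.
Proof. by case/orP=> [/eqP->//|xy yz]; apply/orP; right; apply: lt_leM_trans yz. Qed.

Lemma ltM_leM_add (x y x' y' : M) : ltM x y -> leM x' y' -> ltM (x + x') (y + y').
Proof.
move=> xy /orP[/eqP->|x'y']; first exact: ltM_add2r.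
exact: ltM_trans (ltM_add2r x' xy) (ltM_add2l y x'y').
Qed.

Lemma leM_add (x y x' y' : M) : leM x y -> leM x' y' -> leM (x + x') (y + y').
Proof.
case/orP => [/eqP-> /orP[/eqP->|x'y']|xy x'y']; first exact: leM_refl.
  by apply/orP; right; apply: ltM_add2l.
by apply/orP; right; apply: ltM_leM_add.
Qed.

Lemma leM_sum (I : finType) (f g : I -> M) :
  (forall i, leM (f i) (g i)) -> leM (\sum_i f i) (\sum_i g i).
Proof. by move=> fg; apply: (big_ind2 leM (leM_refl 0) leM_add) => i _. Qed.

Lemma leM_scale2l (l : L) (x y : M) : ltL 0 l -> leM x y -> leM (l *: x) (l *: y).
Proof. by move=> l_gt0 /orP[/eqP->|/(ltM_scale2l l_gt0) lxy]; rewrite /leM ?eqxx ?lxy ?orbT. Qed.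

Lemma ltM_pscale2l (l : L) (x y : M) : ltL 0 l -> ltM (l *: x) (l *: y) = ltM x y.
Proof.
move=> l_gt0; apply/idP/idP; last exact: ltM_scale2l.
move/(ltM_scale2l (ltL_invr_gt0 l_gt0)).
by rewrite !scalerA mulVr ?scale1r // unitL // ltL_gt0_neq0.
Qed.

Lemma ltM_oppr_gt0 (x : M) : ltM 0 (- x) = ltM x 0.
Proof. by rewrite -[- x]sub0r ltM_subr_gt0. Qed.

Lemma neqM_lt (x y : M) : (x != y) = ltM x y || ltM y x.
Proof.
case: (eqVneq x y) => [->|xy]; first by rewrite (negbTE (ltM_irr y)).
by move: (ltM_total x y); rewrite (negbTE xy).
Qed.

Lemma exists_gt0_or_trivial : (exists u, ltM 0 u) \/ (forall x : M, x = 0).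
Proof.
case: (classic (exists x : M, x != 0)) => [[x x_nz]|no_x]; [left|right].
  move: x_nz; rewrite neqM_lt => /orP[x_lt0|]; last by exists x.
  by exists (- x); rewrite ltM_oppr_gt0.
by move=> x; apply/eqP/negPn/negP => x_nz; apply: no_x; exists x.
Qed.

Definition half : L := 2%:R^-1.

Lemma scale_half_double (x : M) : half *: (x + x) = x.
Proof.
rewrite -mulr2n -scaler_nat scalerA mulVr ?scale1r //.
exact: unitL (ltL_gt0_neq0 (ltL_nat_gt0 1)).
Qed.

Lemma ltM_midpoint (x y : M) :
  ltM x y -> ltM x (half *: (x + y)) /\ ltM (half *: (x + y)) y.
Proof.
have half_gt0 : ltL 0 half by apply: ltL_invr_gt0 (ltL_nat_gt0 1).
move=> xy; split.
  by rewrite -{1}(scale_half_double x); apply/ltM_scale2l/ltM_add2l.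
by rewrite -{2}(scale_half_double y); apply/ltM_scale2l/ltM_add2r.
Qed.

Lemma ltM_half (x : M) : ltM 0 x -> ltM (half *: x) x.
Proof. by case/ltM_midpoint; rewrite add0r. Qed.

Lemma half_gt0 (x : M) : ltM 0 x -> ltM 0 (half *: x).
Proof. by case/ltM_midpoint; rewrite add0r. Qed.

Lemma sum_gt0_share (I : finType) (x : M) (y : I -> M) :
  ltM 0 x -> (forall i, ltM (- (#|I|.+1%:R^-1 *: x)) (y i)) -> ltM 0 (x + \sum_i y i).
Proof.
move=> x_gt0 y_gt; set eta := #|I|.+1%:R^-1 *: x.
have eta_gt0 : ltM 0 eta by apply: ltM_scale_gt0 (ltL_invr_gt0 (ltL_nat_gt0 _)) x_gt0.
have x_eta : x = eta *+ #|I|.+1.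
  by rewrite -scaler_nat scalerA mulrV ?scale1r // unitL ?ltL_gt0_neq0 ?ltL_nat_gt0.
have : leM (\sum_(i : I) - eta) (\sum_i y i) by apply: leM_sum => i; apply/orP; right.
rewrite sumr_const => /(leM_add (leM_refl x)).
by apply: lt_leM_trans; rewrite x_eta mulNrn mulrSr addrAC subrr add0r.
Qed.

Section KernelDichotomy.
Variable J : finType.
Implicit Types (s : seq J) (rows : seq {ffun J -> L}).

(* Λ need not be commutative: kernel vectors multiply the rows on the right,
   so that [fun j => a j *: m] solves the equations for every [m : M]. *)
Definition nonzero_kernel s rows : Prop :=
  exists2 a : J -> L, (forall j, j \notin s -> a j = 0) /\ (exists j, a j != 0) &
    all (fun c : {ffun J -> L} => \sum_j c j * a j == 0) rows.

Definition trivial_solutions s rows : Prop :=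
  forall x : J -> M, (forall j, j \notin s -> x j = 0) ->
    all (fun c : {ffun J -> L} => \sum_j c j *: x j == 0) rows -> forall j, x j = 0.

Section Pivot.
Variables (c0 : {ffun J -> L}) (j0 : J).
Hypothesis c0_j0 : c0 j0 != 0.

Definition row_reduce (c : {ffun J -> L}) : {ffun J -> L} :=
  [ffun j => c j - c j0 * (c0 j0)^-1 * c0 j].

Lemma row_reduce_pivot c : row_reduce c j0 = 0.
Proof. by rewrite ffunE -mulrA mulVr ?mulr1 ?subrr ?unitL. Qed.

Lemma sum_row_reduceM c (a : J -> L) :
  \sum_j row_reduce c j * a j = \sum_j c j * a j - c j0 * (c0 j0)^-1 * \sum_j c0 j * a j.
Proof.
by rewrite mulr_sumr -sumrB; apply: eq_bigr => j _; rewrite ffunE mulrBl mulrA.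
Qed.

Lemma sum_row_reduceZ c (x : J -> M) :
  \sum_j row_reduce c j *: x j = \sum_j c j *: x j - (c j0 * (c0 j0)^-1) *: \sum_j c0 j *: x j.
Proof.
by rewrite scaler_sumr -sumrB; apply: eq_bigr => j _; rewrite ffunE scalerBl scalerA.
Qed.

Lemma nonzero_kernel_lift s rows : j0 \notin s -> c0 \in rows ->
  nonzero_kernel s (map row_reduce rows) -> nonzero_kernel (j0 :: s) rows.
Proof.
move=> j0_s c0_in [a [a_supp [j1 a_j1]] /allP a_ker].
have a_j0 : a j0 = 0 by apply: a_supp.
pose t := - (c0 j0)^-1 * \sum_j c0 j * a j.
have sum_upd (c : {ffun J -> L}) :
    \sum_j c j * (if j == j0 then t else a j) = \sum_j c j * a j + c j0 * t.
  rewrite (bigD1 j0) //= [in RHS](bigD1 j0) //= eqxx a_j0 mulr0 add0r addrC.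
  by congr (_ + _); apply: eq_bigr => j /negbTE ->.
exists (fun j => if j == j0 then t else a j).
  split=> [j|]; first by rewrite in_cons negb_or => /andP[/negbTE -> /a_supp].
  exists j1 => /=; have [j1_j0|//] := eqVneq j1 j0.
  by move: a_j1; rewrite j1_j0 a_j0 eqxx.
apply/allP => c c_in; have := a_ker _ (map_f row_reduce c_in).
rewrite sum_upd sum_row_reduceM subr_eq0 => /eqP->.
by rewrite /t mulNr mulrN !mulrA addrN.
Qed.

Lemma trivial_solutions_lift s rows : c0 \in rows ->
  trivial_solutions s (map row_reduce rows) -> trivial_solutions (j0 :: s) rows.
Proof.
move=> c0_in triv x x_supp /allP x_sol.
have c0_x : \sum_j c0 j *: x j = 0 by apply/eqP/x_sol.
pose x' j := if j == j0 then 0 else x j.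
have x'0 : forall j, x' j = 0.
  apply: triv => [j j_s|].
    rewrite /x'; have [//|j_j0] := eqVneq j j0.
    by apply: x_supp; rewrite in_cons negb_or j_j0.
  apply/allP => _ /mapP[c c_in ->].
  have -> : \sum_j row_reduce c j *: x' j = \sum_j row_reduce c j *: x j.
    apply: eq_bigr => j _; rewrite /x'.
    by have [->|//] := eqVneq j j0; rewrite row_reduce_pivot !scale0r.
  by rewrite sum_row_reduceZ c0_x scaler0 subr0; apply: x_sol.
have x_j j : j != j0 -> x j = 0 by move/negbTE => j_j0; have := x'0 j; rewrite /x' j_j0.
have : c0 j0 *: x j0 = 0.
  by rewrite -c0_x (bigD1 j0) //= big1 ?addr0 // => j /x_j ->; rewrite scaler0.
move/(congr1 (fun y => (c0 j0)^-1 *: y)); rewrite scalerA mulVr ?unitL // scale1r scaler0.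
by move=> x_j0 j; case: (eqVneq j j0) => [->|/x_j].
Qed.

End Pivot.

Lemma kernel_dichotomy s rows : uniq s -> nonzero_kernel s rows \/ trivial_solutions s rows.
Proof.
elim: s rows => [|j0 s IH] rows; first by right => x x0 _ j; apply: x0.
case/andP => j0_s s_uniq.
have [/hasP[c0 c0_in c0_j0]|/hasPn no_piv] :=
  boolP (has (fun c : {ffun J -> L} => c j0 != 0) rows).
  case: (IH (map (row_reduce c0 j0) rows) s_uniq) => [ker|triv].
    by left; apply: nonzero_kernel_lift ker.
  by right; apply: trivial_solutions_lift triv.
left; exists (fun j => (j == j0)%:R).
  split=> [j|]; first by rewrite in_cons negb_or => /andP[/negbTE -> _].
  by exists j0; rewrite eqxx oner_neq0.
apply/allP => c /no_piv /negPn /eqP c_j0.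
by rewrite (bigD1 j0) //= eqxx mulr1 c_j0 add0r big1 // => j /negbTE ->; rewrite mulr0.
Qed.

End KernelDichotomy.

Definition lform (V : Type) := (seq (V * L) * M)%type.

Definition lform_eval V (e : V -> M) (l : lform V) : M :=
  \sum_(p <- l.1) p.2 *: e p.1 + l.2.

Definition lform_add V (l1 l2 : lform V) : lform V := (l1.1 ++ l2.1, l1.2 + l2.2).

Definition lform_scale V (c : L) (l : lform V) : lform V :=
  ([seq (p.1, c * p.2) | p <- l.1], c *: l.2).

Definition lform_opp V (l : lform V) : lform V := lform_scale (-1) l.

Definition lform_sub V (l1 l2 : lform V) : lform V := lform_add l1 (lform_opp l2).

Lemma lform_evalD V (e : V -> M) l1 l2 :
  lform_eval e (lform_add l1 l2) = lform_eval e l1 + lform_eval e l2.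
Proof. by rewrite /lform_eval big_cat addrACA. Qed.

Lemma lform_evalZ V (e : V -> M) c l :
  lform_eval e (lform_scale c l) = c *: lform_eval e l.
Proof.
rewrite /lform_eval big_map scalerDr scaler_sumr.
by congr (_ + _); apply: eq_bigr => p _; rewrite scalerA.
Qed.

Lemma lform_evalN V (e : V -> M) l : lform_eval e (lform_opp l) = - lform_eval e l.
Proof. by rewrite lform_evalZ scaleN1r. Qed.

Lemma lform_evalB V (e : V -> M) l1 l2 :
  lform_eval e (lform_sub l1 l2) = lform_eval e l1 - lform_eval e l2.
Proof. by rewrite lform_evalD lform_evalN. Qed.

Fixpoint lform_of_term V (t : term M V) : lform V :=
  match t with
  | TVar v => ([:: (v, 1)], 0)
  | TPar c => ([::], c)
  | TAdd t1 t2 => lform_add (lform_of_term t1) (lform_of_term t2)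
  | TScale c t1 => lform_scale c (lform_of_term t1)
  end.

Lemma lform_of_termE V (e : V -> M) t : teval e t = lform_eval e (lform_of_term t).
Proof.
elim: t => [v|c|t1 IH1 t2 IH2|c t IH] /=.
- by rewrite /lform_eval big_seq1 scale1r addr0.
- by rewrite /lform_eval big_nil add0r.
- by rewrite lform_evalD IH1 IH2.
- by rewrite lform_evalZ IH.
Qed.

Definition extend V (e : V -> M) (a : M) : option V -> M :=
  fun o => if o is Some v then e v else a.

Definition bvar_coef V (l : lform (option V)) : L :=
  \sum_(p <- l.1) if p.1 is None then p.2 else 0.

Definition lform_restr V (l : lform (option V)) : lform V :=
  (pmap (fun p : option V * L => omap (pair^~ p.2) p.1) l.1, l.2).

Lemma lform_eval_extend V (e : V -> M) a l :
  lform_eval (extend e a) l = bvar_coef l *: a + lform_eval e (lform_restr l).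
Proof.
rewrite /lform_eval addrA; congr (_ + _); rewrite /bvar_coef /=.
elim: l.1 => [|[[v|] x] s IH] /=; first by rewrite !big_nil scale0r addr0.
  by rewrite !big_cons IH add0r addrCA.
by rewrite !big_cons IH scalerDl addrA.
Qed.

Definition lsys (V : Type) := (seq (lform V) * seq (lform V))%type.

Definition sys_sat V (e : V -> M) (C : lsys V) : bool :=
  all (fun l => lform_eval e l == 0) C.1 && all (fun l => ltM 0 (lform_eval e l)) C.2.

Definition dnf_sat V (e : V -> M) (D : seq (lsys V)) : bool := has (sys_sat e) D.

Definition sys_and V (C1 C2 : lsys V) : lsys V := (C1.1 ++ C2.1, C1.2 ++ C2.2).

Definition dnf_and V (D1 D2 : seq (lsys V)) : seq (lsys V) :=
  [seq sys_and C1 C2 | C1 <- D1, C2 <- D2].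

Definition sys_not V (C : lsys V) : seq (lsys V) :=
  [seq ([::], [:: l]) | l <- C.1 ++ map (@lform_opp V) C.1] ++
  [seq ([:: l], [::]) | l <- C.2] ++ [seq ([::], [:: lform_opp l]) | l <- C.2].

Definition dnf_not V (D : seq (lsys V)) : seq (lsys V) :=
  foldr (fun C => dnf_and (sys_not C)) [:: ([::], [::])] D.

Lemma sys_and_sat V (e : V -> M) C1 C2 :
  sys_sat e (sys_and C1 C2) = sys_sat e C1 && sys_sat e C2.
Proof. by rewrite /sys_sat !all_cat andbACA. Qed.

Lemma dnf_and_sat V (e : V -> M) D1 D2 :
  dnf_sat e (dnf_and D1 D2) = dnf_sat e D1 && dnf_sat e D2.
Proof.
rewrite /dnf_sat; elim: D1 => //= C1 D1 IH.
rewrite has_cat has_map IH andb_orl; congr (_ || _).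
rewrite (@eq_has _ _ (fun C2 => sys_sat e C1 && sys_sat e C2)); last exact: sys_and_sat.
by case: (sys_sat e C1); rewrite /= ?has_pred0.
Qed.

Lemma sys_not_sat V (e : V -> M) C : dnf_sat e (sys_not C) = ~~ sys_sat e C.
Proof.
have eq0N l : (lform_eval e l != 0) =
    ltM 0 (lform_eval e l) || ltM 0 (lform_eval e (lform_opp l)).
  by rewrite lform_evalN ltM_oppr_gt0 neqM_lt orbC.
have gt0N l : ~~ ltM 0 (lform_eval e l) =
    (lform_eval e l == 0) || ltM 0 (lform_eval e (lform_opp l)).
  by rewrite lform_evalN ltM_oppr_gt0 -leMNgt.
rewrite /sys_sat negb_and -!has_predC (eq_has eq0N) (eq_has gt0N) !has_predU.
rewrite /dnf_sat !has_cat !has_map has_cat has_map -!orbA.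
by congr [|| _, _, _ | _]; apply: eq_has => l; rewrite /sys_sat /= !andbT.
Qed.

Lemma dnf_not_sat V (e : V -> M) D : dnf_sat e (dnf_not D) = ~~ dnf_sat e D.
Proof. by elim: D => //= C D IH; rewrite dnf_and_sat IH sys_not_sat /dnf_sat /= negb_or. Qed.

Definition lform_coef (V : finType) (l : lform V) : {ffun V -> L} :=
  [ffun v => \sum_(p <- l.1) if p.1 == v then p.2 else 0].

Lemma lform_evalB_env (V : finType) (e e' : V -> M) l :
  lform_eval e l - lform_eval e' l = \sum_v lform_coef l v *: (e v - e' v).
Proof.
rewrite /lform_eval opprD addrACA subrr addr0 -sumrB.
under [RHS]eq_bigr do rewrite ffunE scaler_suml.
rewrite exchange_big /=; apply: eq_bigr => p _.
rewrite -scalerBr (bigD1 p.1) //= eqxx big1 ?addr0 // => v.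
by rewrite eq_sym => /negbTE->; rewrite scale0r.
Qed.

Lemma eq_sys_sat V (e e' : V -> M) C : e =1 e' -> sys_sat e C = sys_sat e' C.
Proof.
have eq_eval l : e =1 e' -> lform_eval e l = lform_eval e' l.
  by move=> ee'; congr (_ + _); apply: eq_bigr => p _; rewrite ee'.
by move=> ee'; congr (_ && _); apply: eq_all => l; rewrite eq_eval.
Qed.

Lemma lform_eval_shift (V I : finType) (blk : V -> I) (a : I -> V -> L) (mu : I -> M) e l :
  (forall i v, blk v != i -> a i v = 0) ->
  lform_eval (fun v => e v + a (blk v) v *: mu (blk v)) l =
  lform_eval e l + \sum_i (\sum_v lform_coef l v * a i v) *: mu i.
Proof.
move=> a_supp; rewrite -[LHS](subrK (lform_eval e l)) lform_evalB_env addrC.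
congr (_ + _); under eq_bigr do rewrite [e _ + _]addrC addrK.
under [RHS]eq_bigr do rewrite scaler_suml.
rewrite exchange_big /=; apply: eq_bigr => v _.
rewrite (bigD1 (blk v)) //= big1 ?addr0 ?scalerA // => i.
by rewrite eq_sym => /a_supp ->; rewrite mulr0 scale0r.
Qed.

Definition pivot V (s : seq (lform (option V))) : option (lform (option V)) :=
  ohead [seq l <- s | bvar_coef l != 0].

Variant pivot_spec V (s : seq (lform (option V))) : option (lform (option V)) -> Type :=
  | PivotSome l0 of bvar_coef l0 != 0 & (forall P : pred _, all P s -> P l0) :
      pivot_spec s (Some l0)
  | PivotNone of all (fun l => bvar_coef l == 0) s : pivot_spec s None.

Lemma pivotP V (s : seq (lform (option V))) : pivot_spec s (pivot s).
Proof.
rewrite /pivot; elim: s => [|l s IH] /=; first by constructor.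
case: ifP => [l_nz|/negbFE l_0]; first by constructor => // P /andP[].
case: IH => [l0 l0_nz all_l0|all_0]; last by apply: PivotNone; rewrite /= l_0.
by apply: PivotSome => // P /andP[_ /all_l0].
Qed.

Definition bound V (l : lform (option V)) : lform V :=
  lform_scale (- (bvar_coef l)^-1) (lform_restr l).

Definition lform_subst V (sol : lform V) (l : lform (option V)) : lform V :=
  lform_add (lform_scale (bvar_coef l) sol) (lform_restr l).

Lemma lform_eval_subst V (e : V -> M) sol l :
  lform_eval e (lform_subst sol l) = lform_eval (extend e (lform_eval e sol)) l.
Proof. by rewrite lform_evalD lform_evalZ lform_eval_extend. Qed.

Lemma eq0_eval_extend V (e : V -> M) a l : bvar_coef l != 0 ->
  (lform_eval (extend e a) l == 0) = (a == lform_eval e (bound l)).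
Proof.
move=> /unitL c_unit; rewrite lform_eval_extend /bound lform_evalZ addr_eq0.
rewrite scaleNr -scalerN; apply/eqP/eqP => [<-|->].
  by rewrite scalerA mulVr ?scale1r.
by rewrite scalerA mulrV ?scale1r.
Qed.

Lemma gt0_eval_extend V (e : V -> M) a l :
  ltM 0 (lform_eval (extend e a) l) =
  if bvar_coef l == 0 then ltM 0 (lform_eval e (lform_restr l))
  else if ltL 0 (bvar_coef l) then ltM (lform_eval e (bound l)) a
  else ltM a (lform_eval e (bound l)).
Proof.
rewrite lform_eval_extend /bound lform_evalZ.
set c := bvar_coef l; set t := lform_eval e _.
have [->|c_nz] := eqVneq c 0; first by rewrite scale0r add0r.
case: ifP => [c_gt0|c_ngt0].
  have -> : c *: a + t = c *: a - (- t) by rewrite opprK.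
  rewrite ltM_subr_gt0 -(ltM_pscale2l _ _ (ltL_invr_gt0 c_gt0)) scalerA.
  by rewrite mulVr ?scale1r ?scalerN ?scaleNr ?unitL.
have c_lt0 : ltL c 0 by case: (ltL_neq0 c_nz); rewrite ?c_ngt0.
have c_gt0 : ltL 0 (- c) by rewrite ltL_oppr_gt0.
have -> : c *: a + t = t - (- c) *: a by rewrite scaleNr opprK addrC.
rewrite ltM_subr_gt0 -(ltM_pscale2l _ _ (ltL_invr_gt0 c_gt0)) scalerA.
by rewrite mulVr ?scale1r ?invrN // unitL ?ltL_gt0_neq0.
Qed.

Lemma all_sign_split T (c : T -> L) (P0 P1 P2 : pred T) s :
  all (fun x => if c x == 0 then P0 x else if ltL 0 (c x) then P1 x else P2 x) s =
  [&& all P0 [seq x <- s | c x == 0], all P1 [seq x <- s | ltL 0 (c x)]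
    & all P2 [seq x <- s | ltL (c x) 0]].
Proof.
rewrite !all_filter -!all_predI; apply: eq_all => x /=.
have [->|c_nz] := eqVneq (c x) 0; first by rewrite (negbTE (ltL_irr 0)) !andbT.
case: (ltL_neq0 c_nz) => [c_gt0|c_lt0].
  by rewrite c_gt0 (negbTE (ltL_asym c_gt0)) /= ?andbT.
by rewrite c_lt0 (negbTE (ltL_asym c_lt0)) /= ?andbT.
Qed.

Section PositiveElement.
Variable u : M.
Hypothesis u_gt0 : ltM 0 u.

Lemma exists_lt_all (ys : seq M) : exists a, all (ltM a) ys.
Proof.
elim: ys => [|y ys [a a_lt]]; first by exists 0.
have [ay|] := boolP (ltM a y); first by exists a; rewrite /= ay.
rewrite -leMNgt => ya.
have yu_y : ltM (y - u) y by rewrite -ltM_subr_gt0 opprB addrC subrK.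
exists (y - u); rewrite /= yu_y; apply: sub_all a_lt => z.
exact: ltM_trans (lt_leM_trans yu_y ya).
Qed.

Lemma exists_gt_lt_all (x : M) ys : all (ltM x) ys -> exists a, ltM x a && all (ltM a) ys.
Proof.
elim: ys => [|y ys IH] /=.
  by exists (x + u); rewrite -ltM_subr_gt0 addrC addKr u_gt0.
case/andP=> xy /IH[a /andP[xa a_lt]].
have [ay|] := boolP (ltM a y); first by exists a; rewrite xa ay.
rewrite -leMNgt => ya; have [x_mid mid_y] := ltM_midpoint xy.
exists (half *: (x + y)); rewrite x_mid mid_y; apply: sub_all a_lt => z.
exact: ltM_trans (lt_leM_trans mid_y ya).
Qed.

Lemma exists_between (xs ys : seq M) :
  (exists a, all (ltM^~ a) xs && all (ltM a) ys) <-> allrel ltM xs ys.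
Proof.
split=> [[a /andP[/allP xs_a /allP a_ys]]|].
  by apply/allrelP => x y /xs_a xa /a_ys; apply: ltM_trans.
elim: xs => [_|x xs IH]; first by have [a] := exists_lt_all ys; exists a.
rewrite allrel_consl => /andP[x_ys /IH[a /andP[xs_a a_ys]]].
have [xa|] := boolP (ltM x a); first by exists a; rewrite /= xa xs_a.
rewrite -leMNgt => ax; have [b /andP[xb b_ys]] := exists_gt_lt_all x_ys.
exists b; rewrite /= xb b_ys andbT; apply: sub_all xs_a => z za.
exact: ltM_trans (lt_leM_trans za ax) xb.
Qed.

Definition sys_subst V (sol : lform V) (C : lsys (option V)) : lsys V :=
  (map (lform_subst sol) C.1, map (lform_subst sol) C.2).

(* Once no equation involves the bound variable, a value for it exists iff
   every lower bound lies below every upper bound. *)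
Definition sys_fm V (C : lsys (option V)) : lsys V :=
  let lows := [seq bound l | l <- C.2 & ltL 0 (bvar_coef l)] in
  let ups := [seq bound l | l <- C.2 & ltL (bvar_coef l) 0] in
  (map (@lform_restr V) C.1,
   [seq lform_restr l | l <- C.2 & bvar_coef l == 0] ++
   [seq lform_sub up lo | lo <- lows, up <- ups]).

Definition sys_elim V (C : lsys (option V)) : lsys V :=
  if pivot C.1 is Some l0 then sys_subst (bound l0) C else sys_fm C.

Lemma sys_subst_sat V (e : V -> M) C l0 :
  bvar_coef l0 != 0 -> (forall P : pred _, all P C.1 -> P l0) ->
  (exists a, sys_sat (extend e a) C) <-> sys_sat e (sys_subst (bound l0) C).
Proof.
move=> l0_nz l0_in.
have -> : sys_sat e (sys_subst (bound l0) C) =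
          sys_sat (extend e (lform_eval e (bound l0))) C.
  rewrite /sys_sat !all_map.
  by congr (_ && _); apply: eq_all => l; rewrite /preim /= lform_eval_subst.
split=> [[a C_a]|]; last by exists (lform_eval e (bound l0)).
by have /andP[/l0_in] := C_a; rewrite /= eq0_eval_extend // => /eqP<-.
Qed.

Lemma sys_fm_sat V (e : V -> M) C : all (fun l => bvar_coef l == 0) C.1 ->
  (exists a, sys_sat (extend e a) C) <-> sys_sat e (sys_fm C).
Proof.
move=> C1_0; rewrite /sys_sat /sys_fm /= all_cat.
set lows := [seq bound l | l <- C.2 & ltL 0 (bvar_coef l)].
set ups := [seq bound l | l <- C.2 & ltL (bvar_coef l) 0].
have -> : all (fun l => ltM 0 (lform_eval e l))
            [seq lform_sub up lo | lo <- lows, up <- ups] =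
          allrel ltM (map (lform_eval e) lows) (map (lform_eval e) ups).
  rewrite allrel_mapl allrel_mapr; elim: lows => //= lo lows IH.
  rewrite all_cat all_map IH allrel_consl; congr (_ && _).
  by apply: eq_all => up; rewrite /preim /= lform_evalB ltM_subr_gt0.
have eqs a : all (fun l => lform_eval (extend e a) l == 0) C.1 =
             all (fun l => lform_eval e l == 0) (map (@lform_restr V) C.1).
  rewrite all_map; elim: C.1 C1_0 => //= l s IH /andP[/eqP c0 /IH ->].
  by rewrite lform_eval_extend c0 scale0r add0r.
have ineqs a : all (fun l => ltM 0 (lform_eval (extend e a) l)) C.2 =
    all (fun l => ltM 0 (lform_eval e l))
        [seq lform_restr l | l <- C.2 & bvar_coef l == 0] &&
    (all (ltM^~ a) (map (lform_eval e) lows) && all (ltM a) (map (lform_eval e) ups)).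
  by rewrite (eq_all (gt0_eval_extend e a)) all_sign_split !all_map.
split=> [[a]|/and3P[C1 C2 /exists_between[a between]]].
  by rewrite eqs ineqs => /and3P[-> -> a_between]; apply/exists_between; exists a.
by exists a; rewrite eqs ineqs C1 C2.
Qed.

Lemma sys_elim_sat V (e : V -> M) C :
  (exists a, sys_sat (extend e a) C) <-> sys_sat e (sys_elim C).
Proof.
by rewrite /sys_elim; case: pivotP => [l0|]; [apply: sys_subst_sat | apply: sys_fm_sat].
Qed.

Lemma dnf_elim_sat V (e : V -> M) D :
  (exists a, dnf_sat (extend e a) D) <-> dnf_sat e (map (@sys_elim V) D).
Proof.
rewrite /dnf_sat has_map; elim: D => [|C D IH] /=; first by split=> [[]|].
split=> [[a /orP[C_a|D_a]]|/orP[/sys_elim_sat[a C_a]|/IH[a D_a]]].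
- by apply/orP; left; apply/sys_elim_sat; exists a.
- by apply/orP; right; apply/IH; exists a.
- by exists a; rewrite C_a.
- by exists a; rewrite D_a orbT.
Qed.

Lemma formula_dnf V (f : formula M V) :
  exists D : seq (lsys V), forall e, sat_ ltM f e <-> dnf_sat e D.
Proof.
elim: f => {V} [V t1 t2|V t1 t2|V g [D IH]|V g [D1 IH1] h [D2 IH2]|V g [D IH]].
- exists [:: ([:: lform_sub (lform_of_term t1) (lform_of_term t2)], [::])] => e.
  rewrite /dnf_sat /sys_sat /= lform_evalB -!lform_of_termE subr_eq0 !andbT orbF.
  exact: rwP eqP.
- exists [:: ([::], [:: lform_sub (lform_of_term t2) (lform_of_term t1)])] => e.
  by rewrite /dnf_sat /sys_sat /= lform_evalB -!lform_of_termE ltM_subr_gt0 !andbT orbF.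
- exists (dnf_not D) => e /=; rewrite dnf_not_sat.
  by split=> [not_g|/negP not_D /IH //]; apply/negP => /IH.
- exists (dnf_and D1 D2) => e /=; rewrite dnf_and_sat IH1 IH2.
  by split=> [[-> ->]|/andP].
- exists (map (@sys_elim V) D) => e /=; rewrite -dnf_elim_sat.
  by split=> [[a /IH]|[a /IH]]; exists a.
Qed.

Definition near0 (Q : M -> Prop) : Prop :=
  exists2 eps, ltM 0 eps & forall m, ltM 0 m -> leM m eps -> Q m.

Lemma near0_and (Q1 Q2 : M -> Prop) : near0 Q1 -> near0 Q2 -> near0 (fun m => Q1 m /\ Q2 m).
Proof.
move=> [e1 e1_gt0 Q1_e1] [e2 e2_gt0 Q2_e2].
have [e12|] := boolP (ltM e1 e2).
  exists e1 => // m m_gt0 m_e1; split; first exact: Q1_e1.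
  by apply: Q2_e2 => //; apply/orP; right; apply: le_ltM_trans m_e1 e12.
rewrite -leMNgt => e21; exists e2 => // m m_gt0 m_e2; split; last exact: Q2_e2.
by apply: Q1_e1 => //; apply: leM_trans m_e2 e21.
Qed.

Lemma near0_all (T : eqType) (Q : T -> M -> bool) (s : seq T) :
  {in s, forall x, near0 (Q x)} -> near0 (fun m => all (Q^~ m) s).
Proof.
elim: s => [_|x s IH Q_s]; first by exists u.
have [|eps eps_gt0 Q_eps] := near0_and (Q_s x (mem_head x s)) (IH _).
  by move=> y y_s; apply: Q_s; rewrite in_cons y_s orbT.
by exists eps => // m m_gt0 m_eps; have [/= -> ->] := Q_eps m m_gt0 m_eps.
Qed.

Lemma near0_forall (I : finType) (Q : I -> M -> bool) :
  (forall i, near0 (Q i)) -> near0 (fun m => [forall i, Q i m]).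
Proof.
move=> Q_near0; have [eps eps_gt0 Q_eps] := near0_all (s := enum I) (fun i _ => Q_near0 i).
exists eps => // m m_gt0 m_eps; apply/forallP => i.
by move/allP: (Q_eps m m_gt0 m_eps); apply; rewrite mem_enum.
Qed.

Lemma near0_gt_opp_scale (beta : L) (eta : M) :
  ltM 0 eta -> near0 (fun m => ltM (- eta) (beta *: m)).
Proof.
move=> eta_gt0; have eta_lt0 : ltM (- eta) 0 by rewrite -ltM_oppr_gt0 opprK.
have [->|beta_nz] := eqVneq beta 0; first by exists eta => // m; rewrite scale0r.
case: (ltL_neq0 beta_nz) => [beta_gt0|beta_lt0].
  by exists eta => // m m_gt0 _; apply: ltM_trans eta_lt0 (ltM_scale_gt0 beta_gt0 m_gt0).
have nbeta_gt0 : ltL 0 (- beta) by rewrite ltL_oppr_gt0.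
exists ((- beta)^-1 *: (half *: eta)).
  exact: ltM_scale_gt0 (ltL_invr_gt0 nbeta_gt0) (half_gt0 eta_gt0).
move=> m m_gt0 /(leM_scale2l nbeta_gt0).
rewrite scalerA mulrV ?scale1r ?unitL ?ltL_gt0_neq0 // => m_eta.
by rewrite -ltM_opp2 opprK -scaleNr; apply: le_ltM_trans m_eta (ltM_half eta_gt0).
Qed.

Definition halving (eps : M) (n : nat) : M := iter n ( *:%R half) eps.

Lemma halving_gt0 eps n : ltM 0 eps -> ltM 0 (halving eps n).
Proof. by move=> eps_gt0; elim: n => //= n IH; apply: half_gt0. Qed.

Lemma halving_decr eps (m n : nat) :
  ltM 0 eps -> (m < n)%nat -> ltM (halving eps n) (halving eps m).
Proof.
move=> eps_gt0; apply: (homo_ltn (r := fun x y => ltM y x)) => [y x z xy yz|{}n].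
  exact: ltM_trans yz xy.
exact: ltM_half (halving_gt0 n eps_gt0).
Qed.

Lemma halving_le eps n : ltM 0 eps -> leM (halving eps n) eps.
Proof.
move=> eps_gt0; case: n => [|n]; first exact: leM_refl.
by rewrite /leM (halving_decr eps_gt0 (ltn0Sn n)) orbT.
Qed.

Lemma halving_inj eps : ltM 0 eps -> injective (halving eps).
Proof.
move=> eps_gt0 m n mn.
by case: (ltngtP m n) => // /(halving_decr eps_gt0); rewrite mn (negbTE (ltM_irr _)).
Qed.

Lemma sys_sat_shift (V I : finType) (blk : V -> I) (a : I -> V -> L) C e :
  (forall i v, blk v != i -> a i v = 0) ->
  (forall i, all (fun c : {ffun V -> L} => \sum_v c v * a i v == 0)
                 (map (@lform_coef V) C.1)) ->
  sys_sat e C ->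
  exists2 eps, ltM 0 eps &
    forall mu : I -> M, (forall i, ltM 0 (mu i) && leM (mu i) eps) ->
    sys_sat (fun v => e v + a (blk v) v *: mu (blk v)) C.
Proof.
move=> a_supp a_ker /andP[/allP C1_e /allP C2_e].
pose beta l i := \sum_v lform_coef l v * a i v.
(* Each of the #|I| shifts may use up less than a #|I|.+1-th of the slack of
   a strict inequality. *)
pose eta l := #|I|.+1%:R^-1 *: lform_eval e l.
have [eps eps_gt0 small] :
    near0 (fun m => all (fun l => [forall i, ltM (- eta l) (beta l i *: m)]) C.2).
  apply: near0_all => l /C2_e l_gt0; apply: near0_forall => i; apply: near0_gt_opp_scale.
  exact: ltM_scale_gt0 (ltL_invr_gt0 (ltL_nat_gt0 _)) l_gt0.
exists eps => // mu mu_small; apply/andP; split; apply/allP => l l_in.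
  rewrite lform_eval_shift // (eqP (C1_e l l_in)) add0r big1 // => i _.
  by have /allP/(_ _ (map_f _ l_in))/eqP := a_ker i; rewrite /beta => ->; rewrite scale0r.
rewrite lform_eval_shift //; apply: sum_gt0_share (C2_e l l_in) _ => i.
have /andP[mu_gt0 mu_le] := mu_small i.
by have /allP/(_ l l_in)/forallP := small _ mu_gt0 mu_le; apply.
Qed.

Definition block r (d : 'I_r -> nat) (i : 'I_r) : seq {i : 'I_r & 'I_(d i)} :=
  enum [pred v | tag v == i].

Lemma mem_block r (d : 'I_r -> nat) i v : (v \in block d i) = (tag v == i).
Proof. by rewrite mem_enum. Qed.

Lemma sys_sat_block_determined r (d : 'I_r -> nat) (C : lsys {i : 'I_r & 'I_(d i)}) i :
  trivial_solutions (block d i) (map (@lform_coef _) C.1) ->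
  forall p q : point M d, sys_sat (coord_env p) C -> sys_sat (coord_env q) C ->
    (forall j, j != i -> p j = q j) -> p i = q i.
Proof.
move=> triv p q /andP[/allP C1_p _] /andP[/allP C1_q _] pq_j.
have pq_v : forall v, coord_env p v - coord_env q v = 0.
  apply: triv => [v|]; first by rewrite mem_block => /pq_j; rewrite /coord_env => ->; rewrite subrr.
  apply/allP => _ /mapP[l l_in ->]; rewrite -lform_evalB_env.
  by rewrite (eqP (C1_p l l_in)) (eqP (C1_q l l_in)) subrr.
apply/matrixP => a j; rewrite (ord1 a).
by apply/eqP; rewrite -subr_eq0; apply/eqP/(pq_v (Tagged (fun i => 'I_(d i)) j)).
Qed.

Lemma sys_sat_infinite_grid r (d : 'I_r -> nat) (C : lsys {i : 'I_r & 'I_(d i)}) (p : point M d) :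
  (forall i, nonzero_kernel (block d i) (map (@lform_coef _) C.1)) ->
  sys_sat (coord_env p) C -> contains_infinite_grid (fun q : point M d => sys_sat (coord_env q) C).
Proof.
case/fin_all_exists2 => a a_supp_nz a_ker C_p.
have a_supp i v : tag v != i -> a i v = 0.
  by move=> v_i; apply: (a_supp_nz i).1; rewrite mem_block.
have [eps eps_gt0 C_shift] := sys_sat_shift a_supp a_ker C_p.
pose f i n : 'rV[M]_(d i) := p i + \row_j (a i (Tagged _ j) *: halving eps n).
exists (fun i x => exists n, x = f i n); split => [i|q /fin_all_exists[n q_n]].
  apply: (infinite_set_inj (f := f i)) => [|n]; last by exists n.
  have [v a_v] := (a_supp_nz i).2; have /eqP tag_v : tag v == i.
    by apply: contraNT a_v => /a_supp ->.
  case: v tag_v a_v => i' j /= <- /unitL a_unit m n /matrixP/(_ 0 j).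
  rewrite !mxE => /addrI a_mn; apply: (halving_inj eps_gt0).
  by rewrite -[halving eps m]scale1r -(mulVr a_unit) -scalerA a_mn scalerA mulVr ?scale1r.
have q_shift : coord_env q =1 fun v => coord_env p v + a (tag v) v *: halving eps (n (tag v)).
  by case=> i j; rewrite /coord_env /= q_n !mxE.
rewrite (eq_sys_sat _ q_shift); apply: (C_shift (fun i => halving eps (n i))) => i.
by rewrite halving_gt0 ?halving_le.
Qed.

Lemma grid_count_dnf r (d : 'I_r -> nat) (E : point M d -> Prop)
    (D : seq (lsys {i : 'I_r & 'I_(d i)})) :
  (forall p, E p <-> dnf_sat (coord_env p) D) -> ~ contains_infinite_grid E ->
  forall B, (grid_count E B <= size D * grid_delta B)%nat.
Proof.
move=> E_D noG B.
apply: leq_trans (grid_count_mono B (fun p => (E_D p).1)) (grid_count_has _) => C C_D.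
have C_E p : sys_sat (coord_env p) C -> E p by move=> C_p; apply/E_D/hasP; exists C.
have [[i triv]|no_triv] :=
  classic (exists i, trivial_solutions (block d i) (map (@lform_coef _) C.1)).
  by apply: (grid_count_functional _ (i := i)) => p q; apply: sys_sat_block_determined.
rewrite grid_count0 // => p C_p; apply: noG.
have C_ker i : nonzero_kernel (block d i) (map (@lform_coef _) C.1).
  have [//|triv] := kernel_dichotomy (map (@lform_coef _) C.1) (enum_uniq [pred v | tag v == i]).
  by case: no_triv; exists i.
have [G [G_inf G_C]] := sys_sat_infinite_grid C_ker C_p.
by exists G; split=> // q /G_C /C_E.
Qed.

End PositiveElement.
End OrderedVectorSpace.

Theorem corollary2p23
    (L : unitRingType) (ltL : rel L) (M : lmodType L) (ltM : rel M)
    (HL : ordered_division_ring ltL) (HM : ordered_vector_space ltL ltM)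
    (r : nat) (d : 'I_r -> nat) (E : point M d -> Prop)
    (HE : semilinear_set ltM E) :
  exists alpha : R, (0 < alpha)%R /\
    (~ contains_infinite_grid E ->
     forall B : forall i : 'I_r, {fset 'rV[M]_(d i)},
       (INR (grid_count E B) <= alpha * INR (grid_delta B))%R).
Proof.
have INR_le (n m k : nat) : (n <= m * k)%nat -> (INR n <= INR m * INR k)%R.
  by move/leP; rewrite -mult_INR; apply: le_INR.
case: r d E HE => [|r] d E HE.
  exists (INR 1); split=> [|_ B]; first exact: Rlt_0_1.
  by apply: INR_le; rewrite mul1n grid_count_r0.
case: (exists_gt0_or_trivial HM) => [[u u_gt0]|M0].
  case: HE => f E_f; have [D E_D] := formula_dnf HL HM u_gt0 f.
  exists (INR (size D).+1); split=> [|noG B]; first exact/lt_0_INR/ltP.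
  apply: INR_le; apply: leq_trans (leq_mul (leqnSn _) (leqnn _)).
  by apply: (grid_count_dnf HL HM u_gt0 (D := D)) => // p; rewrite E_f; apply: E_D.
exists (INR 1); split=> [|_ B]; first exact: Rlt_0_1.
apply: INR_le; rewrite mul1n; apply: (grid_count_functional _ (i := ord0)) => p q _ _ _.
by apply/matrixP => a b; rewrite (M0 (p _ a b)) (M0 (q _ a b)).
Qed.
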